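(* Let $R$ be a commutative Noetherian ring and $\alpha$ an automorphism of $R$ such that $R$ is $\alpha$-special, with $a$ an $\alpha$-special element. Let $S=R[\theta;\alpha]$. Then $(1-a\theta)S$ is a maximal right ideal of $S$. If in addition $\alpha$ has infinite order, then $S/(1-a\theta)S$ is a faithful simple right $S$-module.
   Context: $R[\theta;\alpha]$: skew polynomial ring with $\theta r=\alpha(r)\theta$. An ideal $I$ is $\alpha$-stable if $\alpha(I)=I$. For $a\in R$ and $n\ge1$ put $N_n^\alpha(a)=a\alpha(a)\cdots\alpha^{n-1}(a)$. $R$ is $\alpha$-special if there is $a\in R$ (an $\alpha$-special element) with $N_n^\alpha(a)\neq0$ for all $n\ge1$ and such that every nonzero $\alpha$-stable ideal of $R$ contains $N_n^\alpha(a)$ for some $n\ge1$. *)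

From HB Require Import structures.
From mathcomp Require Import all_boot all_order all_algebra.
Set Implicit Arguments. Unset Strict Implicit. Unset Printing Implicit Defensive.
Import GRing.Theory.
Local Open Scope ring_scope.

Section SkewDefs.
Variable R : comNzRingType.

Definition is_ideal (I : R -> Prop) : Prop :=
  [/\ I 0, (forall x y, I x -> I y -> I (x + y)) & (forall r x, I x -> I (r * x))].

Definition ideal_sub (I J : R -> Prop) := forall x, I x -> J x.

Definition noetherian : Prop :=
  forall I : nat -> R -> Prop,
    (forall n, is_ideal (I n)) ->
    (forall n, ideal_sub (I n) (I n.+1)) ->
    exists N, forall m, (N <= m)%N -> forall x, I m x <-> I N x.

Definition alpha_stable (alpha : R -> R) (I : R -> Prop) : Prop :=
  forall y, (exists2 x, I x & alpha x = y) <-> I y.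

Definition Nnorm (alpha : R -> R) (n : nat) (a : R) : R :=
  \prod_(i < n) iter i alpha a.

Definition alpha_special_elt (alpha : R -> R) (a : R) : Prop :=
  (forall n, (1 <= n)%N -> Nnorm alpha n a != 0) /\
  (forall I : R -> Prop, is_ideal I -> (exists x, I x /\ x != 0) ->
     alpha_stable alpha I -> exists2 n, (1 <= n)%N & I (Nnorm alpha n a)).

(* ---------- the skew polynomial ring S = R[theta; alpha] ----------
   Elements are represented by their coefficient polynomials
   sum_i p_i theta^i (coefficients on the left); addition is the
   polynomial addition and multiplication is determined by
   theta r = alpha(r) theta, i.e.
   (sum_i p_i theta^i)(sum_j q_j theta^j) = sum_{i,j} p_i alpha^i(q_j) theta^(i+j). *)
Definition skew_mul (alpha : R -> R) (p q : {poly R}) : {poly R} :=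
  \poly_(k < (size p + size q)%N)
     \sum_(i < k.+1) p`_i * iter i alpha q`_(k - i).

Definition theta : {poly R} := 'X.

Definition is_right_ideal (alpha : R -> R) (J : {poly R} -> Prop) : Prop :=
  [/\ J 0, (forall p q, J p -> J q -> J (p + q))
         & (forall p s, J p -> J (skew_mul alpha p s))].

Definition principal_right_ideal (alpha : R -> R) (f : {poly R}) : {poly R} -> Prop :=
  fun p => exists s, p = skew_mul alpha f s.

Definition maximal_right_ideal (alpha : R -> R) (I : {poly R} -> Prop) : Prop :=
  [/\ is_right_ideal alpha I,
      (exists p, ~ I p) &
      (forall J, is_right_ideal alpha J -> (forall p, I p -> J p) ->
         (forall p, J p <-> I p) \/ (forall p, J p))].

(* The right S-module S/I is simple: nonzero, and its only submodules are 0
   and itself; submodules of S/I are exactly (images of) right ideals J of S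
   containing I. *)
Definition simple_quotient (alpha : R -> R) (I : {poly R} -> Prop) : Prop :=
  (exists p, ~ I p) /\
  (forall J, is_right_ideal alpha J -> (forall p, I p -> J p) ->
     (forall p, J p <-> I p) \/ (forall p, J p)).

(* The right S-module S/I is faithful: its annihilator
   { s | (t + I) s = 0 for all t } = { s | t s \in I for all t } is zero. *)
Definition faithful_quotient (alpha : R -> R) (I : {poly R} -> Prop) : Prop :=
  forall s, (forall t, I (skew_mul alpha t s)) -> s = 0.

Definition infinite_order (alpha : R -> R) : Prop :=
  forall n, (1 <= n)%N -> exists x, iter n alpha x != x.

End SkewDefs.

From HB Require Import structures.
From mathcomp Require Import all_boot all_order all_algebra.
From mathcomp Require Import zify ring.
From Stdlib Require Import Classical.
Set Implicit Arguments. Unset Strict Implicit. Unset Printing Implicit Defensive.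
Import GRing.Theory.
Local Open Scope ring_scope.

(* Modulo P = (1 - a theta) S one has c theta^n = N_k(a) alpha^k(c) theta^(n+k), so every
   element of S is congruent to a monomial of arbitrarily large degree.  For a right ideal
   J containing P, the coefficients c of the monomials c theta^n in J form an ascending
   chain of ideals I_n.  At its stationary level N, c lies in I_N iff a alpha(c) does, and
   the Noetherian condition upgrades alpha^-1(I_N) <= I_N to alpha-stability.  If I_N is
   nonzero it contains a norm N_n(a) = a alpha(N_(n-1)(a)), and peeling off these factors
   gives 1 in I_N, whence J = S; otherwise J contains no nonzero monomial, whence J = P.
   As the norms never vanish, 1 is not in P, so P is maximal, and the norms are regular.
   An annihilator s of S/P of minimal degree m satisfies s r = alpha^m(r) s up to
   annihilators of lower degree, hence s_j alpha^j(r) = alpha^m(r) s_j.  For j < m the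
   annihilator of s_j thus contains alpha^(m-j)(z) - z, nonzero for some z when alpha has
   infinite order, so its largest alpha-stable subideal contains a regular norm and
   s_j = 0.  Finally a monomial in P is zero, so s = 0. *)

Lemma iter_can (T : Type) (f g : T -> T) :
  cancel f g -> forall n, cancel (iter n f) (iter n g).
Proof. by move=> fK n; elim: n => // n IH x; rewrite (iterSr n g) (iterS n f) fK IH. Qed.

Section IterRMorphism.
Variables (R : pzRingType) (f : {rmorphism R -> R}) (n : nat).

Lemma iter_rmorph_is_nmod_morphism : nmod_morphism (iter n f).
Proof. by split=> [|x y]; elim: n => //= k ->; rewrite ?rmorph0 ?rmorphD. Qed.

Lemma iter_rmorph_is_monoid_morphism : monoid_morphism (iter n f).
Proof. by split=> [|x y]; elim: n => //= k ->; rewrite ?rmorph1 ?rmorphM. Qed.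

HB.instance Definition _ :=
  GRing.isNmodMorphism.Build R R (iter n f) iter_rmorph_is_nmod_morphism.
HB.instance Definition _ :=
  GRing.isMonoidMorphism.Build R R (iter n f) iter_rmorph_is_monoid_morphism.

End IterRMorphism.

Definition inv_rmorphism (R : pzRingType) (f : {rmorphism R -> R}) (g : R -> R)
    (fK : cancel f g) (gK : cancel g f) : {rmorphism R -> R} :=
  HB.pack_for {rmorphism R -> R} g
    (GRing.isNmodMorphism.Build R R g (can2_nmod_morphism fK gK))
    (GRing.isMonoidMorphism.Build R R g (can2_monoid_morphism fK gK)).

Section Nnorm.
Variables (R : comNzRingType) (alpha : {rmorphism R -> R}) (a : R).

Lemma Nnorm0 : Nnorm alpha 0 a = 1.
Proof. by rewrite /Nnorm big_ord0. Qed.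

Lemma NnormS k : Nnorm alpha k.+1 a = a * alpha (Nnorm alpha k a).
Proof. by rewrite /Nnorm big_ord_recl rmorph_prod. Qed.

End Nnorm.

Section StableIdeals.
Variables (R : comNzRingType) (alpha alpha_inv : {rmorphism R -> R}).
Hypotheses (alphaK : cancel alpha alpha_inv) (alpha_invK : cancel alpha_inv alpha).

Lemma alpha_stableP (I : R -> Prop) : alpha_stable alpha I <->
  (forall x, I x -> I (alpha x)) /\ (forall x, I x -> I (alpha_inv x)).
Proof.
split=> [st | [Ialpha Iinv] y].
  split=> x Ix; first by apply/st; exists x.
  by have [y Iy <-] := (st x).2 Ix; rewrite alphaK.
split=> [[x Ix <-] | Iy]; first exact: Ialpha.
by exists (alpha_inv y); [apply: Iinv | apply: alpha_invK].
Qed.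

(* [alpha_inv(I) <= I] makes [alpha^k(I)] an ascending chain; where it becomes
   stationary, [alpha(I) <= I] follows. *)
Lemma noetherian_alpha_stable (I : R -> Prop) : noetherian R -> is_ideal I ->
  (forall x, I x -> I (alpha_inv x)) -> alpha_stable alpha I.
Proof.
move=> noethR [I0 ID IM] Iinv; apply/alpha_stableP; split=> // x Ix.
pose K k y := I (iter k alpha_inv y).
have K_ideal k : is_ideal (K k).
  by split=> [|y z Ky Kz|r y Ky]; rewrite /K ?rmorph0 ?rmorphD ?rmorphM; auto.
have K_subS k : ideal_sub (K k) (K k.+1) by move=> y; rewrite /K iterS; apply: Iinv.
have [M KM] := noethR K K_ideal K_subS.
have := (KM M.+1 (leqnSn M) (iter M.+1 alpha x)).1.
by rewrite /K iter_can // [iter M.+1 alpha x]iterSr iter_can //; apply.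
Qed.

Definition stable_core (I : R -> Prop) (y : R) : Prop :=
  forall i, I (iter i alpha y) /\ I (iter i alpha_inv y).

Lemma stable_core_ideal I : is_ideal I -> is_ideal (stable_core I).
Proof.
case=> I0 ID IM; split=> [i|y z Cy Cz i|r y Cy i]; rewrite ?rmorph0 ?rmorphD ?rmorphM //.
  by have [? ?] := Cy i; have [? ?] := Cz i; split; apply: ID.
by have [? ?] := Cy i; split; apply: IM.
Qed.

Lemma stable_core_stable I : alpha_stable alpha (stable_core I).
Proof.
apply/alpha_stableP; split=> y Cy i; split.
- by rewrite -iterSr; case: (Cy i.+1).
- by case: i => [|i]; [case: (Cy 1%N) | rewrite iterSr alphaK; case: (Cy i)].
- by case: i => [|i]; [case: (Cy 1%N) | rewrite iterSr alpha_invK; case: (Cy i)].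
- by rewrite -iterSr; case: (Cy i.+1).
Qed.

End StableIdeals.

Section SkewPolynomials.
Variables (R : comNzRingType) (alpha : {rmorphism R -> R}).
Local Notation "p ** q" := (skew_mul alpha p q) (at level 40, left associativity).

Lemma coef_skew_mul p q k :
  (p ** q)`_k = \sum_(j < k.+1) p`_j * iter j alpha q`_(k - j).
Proof.
rewrite /skew_mul coef_poly; case: ltnP => // kge; rewrite big1 // => j _.
have [pj|pj] := leqP (size p) j; first by rewrite nth_default ?mul0r.
rewrite [q`__]nth_default ?rmorph0 ?mulr0 //.
by move: pj kge; case: j => j /= _; lia.
Qed.

Lemma coef_skew_mul_rev p q k :
  (p ** q)`_k = \sum_(j < k.+1) p`_(k - j) * iter (k - j) alpha q`_j.
Proof.
rewrite coef_skew_mul (reindex_inj rev_ord_inj) /=.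
by apply: eq_bigr => j _; rewrite (sub_ordK j).
Qed.

Lemma skew_mulA p q r : p ** (q ** r) = (p ** q) ** r.
Proof.
apply/polyP=> i; rewrite coef_skew_mul coef_skew_mul_rev.
pose c3 (j k : nat) := p`_j * (iter j alpha q`_(i - j - k) * iter (i - k) alpha r`_k).
transitivity (\sum_(j < i.+1) \sum_(k < i.+1 | (k <= i - j)%N) c3 j k).
  apply: eq_bigr => /= j _; rewrite coef_skew_mul_rev rmorph_sum big_distrr /=.
  rewrite (big_ord_narrow_leq (leq_subr _ _)); apply: eq_bigr => k _ /=.
  rewrite rmorphM /= -iterD /c3; congr (_ * (_ * iter _ _ _)).
  by have := ltn_ord k; have := ltn_ord j; lia.
rewrite (exchange_big_dep predT) //=; apply: eq_bigr => k _.
transitivity (\sum_(j < i.+1 | (j <= i - k)%N) c3 j k).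
  by apply: eq_bigl => j; have := ltn_ord j; have := ltn_ord k; lia.
rewrite (big_ord_narrow_leq (leq_subr _ _)) coef_skew_mul big_distrl /=.
by apply: eq_bigr => j _; rewrite /c3 -!subnDA addnC mulrA.
Qed.

Lemma skew_mulDr p q r : r ** (p + q) = r ** p + r ** q.
Proof.
apply/polyP=> k; rewrite coefD !coef_skew_mul -big_split.
by apply: eq_bigr => j _; rewrite coefD rmorphD mulrDr.
Qed.

Lemma skew_mulNr p r : r ** (- p) = - (r ** p).
Proof.
apply/polyP=> k; rewrite coefN !coef_skew_mul -sumrN.
by apply: eq_bigr => j _; rewrite coefN rmorphN mulrN.
Qed.

Lemma skew_mulBl p q r : (p - q) ** r = p ** r - q ** r.
Proof.
apply/polyP=> k; rewrite coefB !coef_skew_mul -sumrB.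
by apply: eq_bigr => j _; rewrite coefB mulrBl.
Qed.

Lemma skew_mulBr p q r : r ** (p - q) = r ** p - r ** q.
Proof. by rewrite skew_mulDr skew_mulNr. Qed.

Lemma skew_mulr0 p : p ** 0 = 0.
Proof.
by apply/polyP=> k; rewrite coef_skew_mul coef0 big1 // => j _; rewrite coef0 rmorph0 mulr0.
Qed.

Lemma coef_monomial (c : R) n j : (c%:P * 'X^n)`_j = if j == n then c else 0.
Proof. by rewrite coefCM coefXn; case: eqP; rewrite ?mulr1 ?mulr0. Qed.

Lemma coef_skew_mul_monomial p c n k : (p ** (c%:P * 'X^n))`_k =
  if (n <= k)%N then p`_(k - n) * iter (k - n) alpha c else 0.
Proof.
rewrite coef_skew_mul_rev; case: leqP => nk.
  rewrite (bigD1 (Ordinal (nk : n < k.+1)%N)) //= coef_monomial eqxx big1 ?addr0 //.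
  move=> j /eqP nj; rewrite coef_monomial.
  by case: eqP => [jn|]; [case: nj; apply: val_inj | rewrite rmorph0 mulr0].
rewrite big1 // => j _; rewrite coef_monomial.
case: eqP => [jn|]; last by rewrite rmorph0 mulr0.
by have := ltn_ord j; rewrite jn; lia.
Qed.

Lemma coef_monomial_skew_mul q c n k : ((c%:P * 'X^n) ** q)`_k =
  if (n <= k)%N then c * iter n alpha q`_(k - n) else 0.
Proof.
rewrite coef_skew_mul; case: leqP => nk.
  rewrite (bigD1 (Ordinal (nk : n < k.+1)%N)) //= coef_monomial eqxx big1 ?addr0 //.
  move=> j /eqP nj; rewrite coef_monomial.
  by case: eqP => [jn|]; [case: nj; apply: val_inj | rewrite mul0r].
rewrite big1 // => j _; rewrite coef_monomial; case: eqP => [jn|]; last by rewrite mul0r.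
by have := ltn_ord j; rewrite jn; lia.
Qed.

Lemma polyC_monomial (c : R) : c%:P = c%:P * 'X^0.
Proof. by rewrite expr0 mulr1. Qed.

Lemma coef_skew_mulC p r k : (p ** r%:P)`_k = p`_k * iter k alpha r.
Proof. by rewrite polyC_monomial coef_skew_mul_monomial !subn0. Qed.

Lemma coef_skew_Cmul p r k : (r%:P ** p)`_k = r * p`_k.
Proof. by rewrite polyC_monomial coef_monomial_skew_mul !subn0. Qed.

Lemma skew_mul1l p : 1 ** p = p.
Proof. by apply/polyP=> k; rewrite -polyC1 coef_skew_Cmul mul1r. Qed.

Lemma skew_mul1r p : p ** 1 = p.
Proof. by apply/polyP=> k; rewrite -polyC1 coef_skew_mulC rmorph1 mulr1. Qed.

Lemma skew_mulX p : p ** 'X = p * 'X.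
Proof.
have X_monomial : 'X = 1%:P * 'X^1 :> {poly R} by rewrite mul1r expr1.
apply/polyP=> k; rewrite [in LHS]X_monomial coef_skew_mul_monomial coefMX.
by case: k => [|k] //=; rewrite subn1 /= rmorph1 mulr1.
Qed.

Lemma skew_mul_monomialC c n r : (c%:P * 'X^n) ** r%:P = (c * iter n alpha r)%:P * 'X^n.
Proof.
apply/polyP=> k; rewrite coef_skew_mulC !coef_monomial.
by case: eqP => [->|]; rewrite ?mul0r.
Qed.

Lemma right_idealN J p : is_right_ideal alpha J -> J p -> J (- p).
Proof. by case=> _ _ Jmul /(Jmul _ (-1)); rewrite skew_mulNr skew_mul1r. Qed.

Lemma right_idealB J p q : is_right_ideal alpha J -> J p -> J q -> J (p - q).
Proof. by move=> JR Jp /(right_idealN JR); case: JR => _ JD _; apply: JD. Qed.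

Lemma principal_right_ideal_is_right_ideal f :
  is_right_ideal alpha (principal_right_ideal alpha f).
Proof.
split=> [|_ _ [s ->] [t ->]|_ t [s ->]].
- by exists 0; rewrite skew_mulr0.
- by exists (s + t); rewrite skew_mulDr.
- by exists (s ** t); rewrite skew_mulA.
Qed.

End SkewPolynomials.

Section CoefIdeals.
Variables (R : comNzRingType) (alpha alpha_inv : {rmorphism R -> R}).
Hypothesis alpha_invK : cancel alpha_inv alpha.
Variable J : {poly R} -> Prop.
Hypothesis J_right_ideal : is_right_ideal alpha J.

Definition coef_ideal (n : nat) (c : R) : Prop := J (c%:P * 'X^n).

Lemma coef_ideal_is_ideal n : is_ideal (coef_ideal n).
Proof.
case: J_right_ideal => J0 JD Jmul; split; rewrite /coef_ideal.
- by rewrite mul0r.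
- by move=> x y Jx Jy; rewrite polyCD mulrDl; apply: JD.
- move=> r x /(Jmul _ (iter n alpha_inv r)%:P).
  by rewrite skew_mul_monomialC (iter_can alpha_invK) [x * _]mulrC.
Qed.

Lemma coef_ideal_subS n : ideal_sub (coef_ideal n) (coef_ideal n.+1).
Proof.
by case: J_right_ideal => _ _ Jmul c /(Jmul _ 'X); rewrite skew_mulX -mulrA -exprSr.
Qed.

Lemma coef_ideal_sub m n : (m <= n)%N -> ideal_sub (coef_ideal m) (coef_ideal n).
Proof.
move=> /subnK <-; elim: (n - m)%N => // k IH c /IH.
by rewrite addSn; apply: coef_ideal_subS.
Qed.

End CoefIdeals.

Section OneMinusATheta.
Variables (R : comNzRingType) (alpha : {rmorphism R -> R}) (a : R).
Local Notation "p ** q" := (skew_mul alpha p q) (at level 40, left associativity).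
Local Notation f := (1 - a%:P ** theta R).
Local Notation P := (principal_right_ideal alpha f).

Let P_right_ideal : is_right_ideal alpha P := principal_right_ideal_is_right_ideal alpha f.

Lemma coef_f_skew_mul s k :
  (f ** s)`_k = s`_k - if k is k'.+1 then a * alpha s`_k' else 0.
Proof.
rewrite skew_mulBl skew_mul1l coefB /theta skew_mulX.
rewrite -[a%:P * 'X]/(a%:P * 'X^1) coef_monomial_skew_mul.
by case: k => [|k] //=; rewrite subn1.
Qed.

Lemma monomial_shift c n : P (c%:P * 'X^n - (a * alpha c)%:P * 'X^(n.+1)).
Proof.
exists (c%:P * 'X^n); apply/polyP=> k.
rewrite coef_f_skew_mul coefB !coef_monomial; case: k => [|k] //=.
by rewrite coef_monomial eqSS; case: (k =P n); rewrite ?rmorph0 ?mulr0.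
Qed.

Lemma monomial_shift_iter k c n :
  P (c%:P * 'X^n - (Nnorm alpha k a * iter k alpha c)%:P * 'X^(n + k)).
Proof.
elim: k => [|k IH]; first by rewrite Nnorm0 mul1r addn0 subrr; case: P_right_ideal.
case: P_right_ideal => _ PD _.
have := PD _ _ IH (monomial_shift (Nnorm alpha k a * iter k alpha c) (n + k)).
by rewrite addrA subrK addnS rmorphM mulrA -NnormS -iterS.
Qed.

Lemma equiv_monomial p : exists n c, P (p - c%:P * 'X^n).
Proof.
case: P_right_ideal => P0 PD Pmul.
elim/poly_ind: p => [|q c [m [d Pq]]]; first by exists 0%N, 0; rewrite mul0r subrr.
exists m.+1, (d + Nnorm alpha m.+1 a * iter m.+1 alpha c).
have := PD _ _ (Pmul _ 'X Pq) (monomial_shift_iter m.+1 c 0).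
rewrite skew_mulX add0n -polyC_monomial mulrBl -mulrA -exprSr; congr P.
by rewrite polyCD mulrDl; ring.
Qed.

Lemma equiv_monomial_ge p M : exists n c, (M <= n)%N /\ P (p - c%:P * 'X^n).
Proof.
have [n [c Pp]] := equiv_monomial p.
exists (n + M)%N, (Nnorm alpha M a * iter M alpha c); split; first exact: leq_addl.
case: P_right_ideal => _ PD _.
by have := PD _ _ Pp (monomial_shift_iter M c n); rewrite addrA subrK.
Qed.

Lemma one_notin_P : (forall n, (1 <= n)%N -> Nnorm alpha n a != 0) -> ~ P 1.
Proof.
move=> Nnorm_neq0 [s fs].
have sE k : s`_k = Nnorm alpha k a.
  elim: k => [|k IH].
    have := congr1 (fun p : {poly R} => p`_0) fs.
    by rewrite /= coef_f_skew_mul coef1 subr0 Nnorm0 => <-.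
  have := congr1 (fun p : {poly R} => p`_k.+1) fs.
  by rewrite /= coef_f_skew_mul coef1 /= NnormS -IH => /eqP; rewrite eq_sym subr_eq0 => /eqP.
have := sE (size s); rewrite nth_default // => /esym/eqP.
case: (size s) => [|n]; first by rewrite Nnorm0 oner_eq0.
by apply/negP/Nnorm_neq0.
Qed.

End OneMinusATheta.

Section SpecialElement.
Variables (R : comNzRingType) (alpha alpha_inv : {rmorphism R -> R}) (a : R).
Hypotheses (alphaK : cancel alpha alpha_inv) (alpha_invK : cancel alpha_inv alpha).
Hypothesis noethR : noetherian R.
Hypothesis Nnorm_neq0 : forall n, (1 <= n)%N -> Nnorm alpha n a != 0.
Hypothesis stable_ideal_Nnorm : forall I : R -> Prop, is_ideal I ->
  (exists x, I x /\ x != 0) -> alpha_stable alpha I ->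
  exists2 n, (1 <= n)%N & I (Nnorm alpha n a).
Local Notation "p ** q" := (skew_mul alpha p q) (at level 40, left associativity).
Local Notation f := (1 - a%:P ** theta R).
Local Notation P := (principal_right_ideal alpha f).

Let P_right_ideal : is_right_ideal alpha P := principal_right_ideal_is_right_ideal alpha f.

Section OverP.
Variable J : {poly R} -> Prop.
Hypotheses (J_right_ideal : is_right_ideal alpha J) (P_sub_J : forall p, P p -> J p).
Local Notation I := (coef_ideal J).

Lemma coef_idealS_shift n c : I n c <-> I n.+1 (a * alpha c).
Proof.
have J_shift := P_sub_J (monomial_shift alpha a c n).
case: (J_right_ideal) => _ JD _; rewrite /coef_ideal; split=> Jc.
  by have := right_idealB J_right_ideal Jc J_shift; rewrite opprB addrC subrK.
by have := JD _ _ J_shift Jc; rewrite subrK.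
Qed.

Lemma coef_ideal_stationary : exists N, alpha_stable alpha (I N) /\
  forall m, (N <= m)%N -> forall c, I m c <-> I N c.
Proof.
have I_ideal := coef_ideal_is_ideal alpha_invK J_right_ideal.
have [N IN] := noethR I_ideal (coef_ideal_subS J_right_ideal).
exists N; split=> //; apply: (noetherian_alpha_stable alphaK alpha_invK noethR (I_ideal N)).
move=> c INc; apply/coef_idealS_shift/(IN _ (leqnSn N)).
by rewrite alpha_invK; case: (I_ideal N) => _ _; apply.
Qed.

Lemma right_ideal_full_or_monomial_free :
  (forall p, J p) \/ (forall n c, J (c%:P * 'X^n) -> c = 0).
Proof.
have [N [IN_stable IN]] := coef_ideal_stationary.
have IN_ideal := coef_ideal_is_ideal alpha_invK J_right_ideal N.
case: (classic (exists c, I N c /\ c != 0)) => [IN_neq0|IN_eq0]; [left|right].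
  have [n _ IN_Nnorm] := stable_ideal_Nnorm IN_ideal IN_neq0 IN_stable.
  have IN1 : I N 1.
    elim: n IN_Nnorm => [|n IHn]; first by rewrite Nnorm0.
    by rewrite NnormS => /(IN _ (leqnSn N))/(coef_idealS_shift N _).2/IHn.
  move=> p; have [m [c [Nm Pp]]] := equiv_monomial_ge alpha a p N.
  have Jc : J (c%:P * 'X^m).
    by apply/(IN _ Nm c); rewrite -[c]mulr1; case: IN_ideal => _ _; apply.
  by case: J_right_ideal => _ JD _; have := JD _ _ (P_sub_J Pp) Jc; rewrite subrK.
move=> n c Jc; apply/eqP/negPn/negP => c_neq0; apply: IN_eq0; exists c; split=> //.
by apply/(IN (n + N)%N (leq_addl _ _))/(coef_ideal_sub J_right_ideal (leq_addr N n)).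
Qed.

End OverP.

Lemma P_maximal : maximal_right_ideal alpha P.
Proof.
split=> //; first by exists 1; apply: one_notin_P.
move=> J J_right_ideal P_sub_J.
have [J_full|J_monomial_free] := right_ideal_full_or_monomial_free J_right_ideal P_sub_J.
  by right.
left=> p; split=> [Jp|]; last exact: P_sub_J.
have [n [c Pp]] := equiv_monomial alpha a p.
have Jc : J (c%:P * 'X^n).
  by have := right_idealB J_right_ideal Jp (P_sub_J _ Pp); rewrite opprB addrC subrK.
by move: Pp; rewrite (J_monomial_free _ _ Jc) mul0r subr0.
Qed.

Lemma monomial_in_P_eq0 n c : P (c%:P * 'X^n) -> c = 0.
Proof.
have [P_full|] := right_ideal_full_or_monomial_free P_right_ideal (fun p => id); last exact.
by case: (one_notin_P Nnorm_neq0).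
Qed.

(* [alpha^-k(y)] is congruent to [(N_k(a) y) theta^k] modulo P. *)
Lemma Nnorm_lreg k : GRing.lreg (Nnorm alpha k a).
Proof.
apply: mulrI0_lreg => y Ny0; have := monomial_shift_iter alpha a k (iter k alpha_inv y) 0.
rewrite (iter_can alpha_invK) Ny0 mul0r subr0 => /monomial_in_P_eq0 y0.
by rewrite -(iter_can alpha_invK k y) y0 rmorph0.
Qed.

Section Faithful.
Hypothesis alpha_infinite : infinite_order alpha.

(* The largest alpha-stable ideal inside the annihilator of [c] contains the nonzero
   element [alpha^e(x0) - x0], hence a norm, which is regular. *)
Lemma ann_iter_sub_eq0 e c :
  (0 < e)%N -> (forall z, (iter e alpha z - z) * c = 0) -> c = 0.
Proof.
move=> e_gt0 c_ann; pose annc y := y * c = 0.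
have annc_ideal : is_ideal annc.
  split=> [|x y xc yc|r x xc]; rewrite /annc ?mul0r // ?mulrDl ?xc ?yc ?addr0 //.
  by rewrite -mulrA xc mulr0.
have [x0 x0_moved] := alpha_infinite e_gt0.
have core_x0 : stable_core alpha alpha_inv annc (iter e alpha x0 - x0).
  move=> i; rewrite /annc !rmorphB /=; split; first by rewrite -iterD addnC iterD c_ann.
  rewrite -[in iter e alpha x0](iter_can alpha_invK i x0) -iterD addnC iterD.
  by rewrite (iter_can alphaK) c_ann.
have core_neq0 : iter e alpha x0 - x0 != 0 by rewrite subr_eq0.
have [n _ core_Nnorm] := stable_ideal_Nnorm (stable_core_ideal alpha alpha_inv annc_ideal)
  (ex_intro _ _ (conj core_x0 core_neq0)) (stable_core_stable alphaK alpha_invK _).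
by apply/eqP; rewrite -(mulrI_eq0 _ (@Nnorm_lreg n)); case: (core_Nnorm 0%N) => /eqP.
Qed.

Lemma ann_skew_commutator (s : {poly R}) (r : R) m : (forall t, P (t ** s)) ->
  forall t, P (t ** (s ** r%:P - (iter m alpha r)%:P ** s)).
Proof.
move=> s_ann t; rewrite skew_mulBr !skew_mulA; apply: right_idealB P_right_ideal _ _.
  by case: P_right_ideal => _ _; apply.
exact: s_ann.
Qed.

Lemma size_skew_commutator (s : {poly R}) (r : R) m : size s = m.+1 ->
  (size (s ** r%:P - (iter m alpha r)%:P ** s)%R <= m)%N.
Proof.
move=> s_size; apply/leq_sizeP => j mj; rewrite coefB coef_skew_mulC coef_skew_Cmul.
case: (ltngtP j m) => [|jm|->]; first by rewrite ltnNge mj.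
  by rewrite nth_default ?mul0r ?mulr0 ?subrr // s_size.
by rewrite mulrC subrr.
Qed.

Lemma P_faithful : faithful_quotient alpha P.
Proof.
move=> s0 s0_ann.
suff ann_eq0 m (s : {poly R}) : (size s <= m)%N -> (forall t, P (t ** s)) -> s = 0.
  exact: ann_eq0 s0_ann.
elim: m s => [|m IH] s s_size s_ann; first by apply/eqP; rewrite -size_poly_eq0 -leqn0.
have [s_small|s_big] := leqP (size s) m; first exact: IH.
have {s_big} s_size : size s = m.+1 by apply/eqP; rewrite eqn_leq s_size s_big.
have s_commute r k : s`_k * iter k alpha r = iter m alpha r * s`_k.
  have := IH _ (size_skew_commutator r s_size) (ann_skew_commutator r m s_ann).
  move/(congr1 (fun p : {poly R} => p`_k))/eqP.
  by rewrite coefB coef_skew_mulC coef_skew_Cmul coef0 subr_eq0 => /eqP.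
have s_low j : (j < m)%N -> s`_j = 0.
  move=> jm; apply: (@ann_iter_sub_eq0 (m - j)); first by rewrite subn_gt0.
  move=> z; have := s_commute (iter j alpha_inv z) j.
  rewrite -[in iter m _ _](subnK (ltnW jm)) iterD !(iter_can alpha_invK) => s_jz.
  by rewrite mulrBl -s_jz mulrC subrr.
have s_monomial : s = (s`_m)%:P * 'X^m.
  apply/polyP=> k; rewrite coef_monomial; case: (ltngtP k m) => [km|mk|->] //.
    by rewrite s_low.
  by rewrite nth_default // s_size.
have := s_ann 1; rewrite skew_mul1l s_monomial => /monomial_in_P_eq0 sm0.
by rewrite sm0 mul0r.
Qed.

End Faithful.

End SpecialElement.

Theorem proposition4p3 (R : comNzRingType) (alpha : {rmorphism R -> R}) (a : R) :
  noetherian R ->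
  bijective alpha ->
  alpha_special_elt alpha a ->
  maximal_right_ideal alpha
    (principal_right_ideal alpha (1 - skew_mul alpha a%:P (theta R))) /\
  (infinite_order alpha ->
   simple_quotient alpha
     (principal_right_ideal alpha (1 - skew_mul alpha a%:P (theta R))) /\
   faithful_quotient alpha
     (principal_right_ideal alpha (1 - skew_mul alpha a%:P (theta R)))).
Proof.
move=> noethR [g alpha_gK g_alphaK] [Nnorm_neq0 stable_ideal_Nnorm].
pose alpha_inv := inv_rmorphism alpha_gK g_alphaK.
have alphaK : cancel alpha alpha_inv := alpha_gK.
have alpha_invK : cancel alpha_inv alpha := g_alphaK.
have P_max := P_maximal alphaK alpha_invK noethR Nnorm_neq0 stable_ideal_Nnorm.
split=> // alpha_infinite; split; first by case: P_max.
exact: P_faithful alphaK alpha_invK noethR Nnorm_neq0 stable_ideal_Nnorm alpha_infinite.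
Qed.
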